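(* Let $\beta,\sigma,\kappa,\gamma,\delta$ be parameters with $\beta,\sigma,\kappa\ge 0$, $\gamma>0$, $\kappa+\sigma>0$, $\delta>0$, and let $0\le q\le 1$. Consider the system \begin{align*} \dot{A}(t)&=q\beta \big(1-A(t)-I(t)-R(t)\big)\big(A(t)+I(t)\big)-\sigma A(t)-\kappa A(t),\\ \dot{I}(t)&=(1-q)\beta \big(1-A(t)-I(t)-R(t)\big)\big(A(t)+I(t)\big) +\sigma A(t)-\gamma I(t),\\ \dot{R}(t)&=\kappa A(t)+\gamma I(t) - \delta R(t), \end{align*} with $S(t)=1-A(t)-I(t)-R(t)$. If $$R_{0}:= \max\left( \frac{\beta}{\kappa+\gamma+\sigma},\ \frac{\beta\big(q\gamma+(1-q)\kappa+\sigma\big)}{\gamma(\kappa+\sigma)} \right) <1,$$ then the disease-free equilibrium $(S,A,I,R)=(1,0,0,0)$ is globally asymptotically stable.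
   Context: This is the single-group SAIR(S) model obtained from $\dot S=-\beta S(A+I)+\delta R$, $\dot A=q\beta S(A+I)-\sigma A-\kappa A$, $\dot I=(1-q)\beta S(A+I)+\sigma A-\gamma I$, $\dot R=\kappa A+\gamma I-\delta R$ by eliminating $S=1-A-I-R$. Here $S,A,I,R$ are the proportions of susceptible, asymptomatic-infected, symptomatic-infected and recovered individuals (so states lie in $A,I,R\ge 0$, $A+I+R\le 1$); $\beta$ is the transmission rate, $\sigma$ the asymptomatic-to-symptomatic progression rate, $\kappa,\gamma$ the recovery rates of asymptomatic and symptomatic infected, $\delta$ the rate at which immunity recedes, and $q$ the proportion of new infections that are asymptomatic. *)

From Stdlib Require Import Reals.
From Coquelicot Require Import Coquelicot.
Open Scope R_scope.

Definition SAIR_R0 (beta sigma kappa gamma q : R) : R :=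
  Rmax (beta / (kappa + gamma + sigma))
       (beta * (q * gamma + (1 - q) * kappa + sigma) / (gamma * (kappa + sigma))).

Definition in_Omega (a i r : R) : Prop :=
  0 <= a /\ 0 <= i /\ 0 <= r /\ a + i + r <= 1.

Definition SAIR_solution (beta sigma kappa gamma delta q : R)
    (A I Rc : R -> R) : Prop :=
  forall t, 0 <= t ->
    is_derive A t (q * beta * (1 - A t - I t - Rc t) * (A t + I t)
                     - sigma * A t - kappa * A t) /\
    is_derive I t ((1 - q) * beta * (1 - A t - I t - Rc t) * (A t + I t)
                     + sigma * A t - gamma * I t) /\
    is_derive Rc t (kappa * A t + gamma * I t - delta * Rc t).

(* Distance of the state (S,A,I,R) = (1-A-I-R, A, I, R) to the disease-free
   equilibrium (1,0,0,0), measured in the l1 norm. *)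
Definition dist_DFE (a i r : R) : R :=
  Rabs ((1 - a - i - r) - 1) + Rabs a + Rabs i + Rabs r.

Definition DFE_globally_asymptotically_stable
    (beta sigma kappa gamma delta q : R) : Prop :=
  (forall eps, 0 < eps -> exists eta, 0 < eta /\
     forall A I Rc : R -> R,
       SAIR_solution beta sigma kappa gamma delta q A I Rc ->
       in_Omega (A 0) (I 0) (Rc 0) ->
       dist_DFE (A 0) (I 0) (Rc 0) < eta ->
       forall t, 0 <= t -> dist_DFE (A t) (I t) (Rc t) < eps) /\
  (forall A I Rc : R -> R,
       SAIR_solution beta sigma kappa gamma delta q A I Rc ->
       in_Omega (A 0) (I 0) (Rc 0) ->
       is_lim (fun t => dist_DFE (A t) (I t) (Rc t)) p_infty 0).

From Stdlib Require Import Reals Lra Psatz.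
From Coquelicot Require Import Coquelicot.
Open Scope R_scope.

(* Forward invariance of the feasible region: the sum of the squared negative
   parts of A, I, R and S = 1 - A - I - R vanishes at t = 0 and, on [0, T],
   satisfies a linear differential inequality whose constant depends on a bound
   for the solution there; by Gronwall it stays 0.
   Decay: with K = q gamma + (1 - q) kappa + sigma, the weighted infected mass
   (gamma + sigma) A + (sigma + kappa) I has derivative
   (beta K S - gamma (kappa + sigma)) (A + I) <= -(gamma (kappa + sigma) - beta K) (A + I),
   and this gap is positive as soon as the second term of R0 is below 1.  R plus a large multiple of the weighted mass is
   then a Lyapunov function comparable to A + I + R whose derivative is at most
   -min(delta, 1) (A + I + R), so the distance to the disease-free equilibrium
   decays exponentially, which gives both stability and attractivity. *)

Lemma is_derive_continuity_pt (f : R -> R) (x l : R) :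
  is_derive f x l -> continuity_pt f x.
Proof.
  intros Hf. apply continuity_pt_filterlim.
  apply (ex_derive_continuous (K := R_AbsRing) (V := R_NormedModule)).
  now exists l.
Qed.

Lemma gronwall_is_derive (g dg : R -> R) (L T : R) :
  (forall t, 0 <= t <= T -> is_derive g t (dg t)) ->
  (forall t, 0 <= t <= T -> dg t <= L * g t) ->
  forall t, 0 <= t <= T -> g t <= g 0 * exp (L * t).
Proof.
  intros Hg Hle t Ht.
  set (h u := g u * exp (- L * u)).
  set (dh u := (dg u - L * g u) * exp (- L * u)).
  assert (Hh : forall u, 0 <= u <= T -> is_derive h u (dh u)).
  { intros u Hu. unfold h, dh. evar_last.
    - apply (is_derive_mult g (fun u => exp (- L * u))); [now apply Hg | | ].
      + apply (is_derive_comp exp (fun u => - L * u)); [apply is_derive_exp |].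
        evar_last; [apply is_derive_scal, is_derive_id |].
        simpl; reflexivity.
      + intros; apply Rmult_comm.
    - unfold scal, one, mult, plus; simpl; unfold mult; simpl. ring. }
  destruct (MVT_gen h 0 t dh) as (c & Hc & Hmvt);
    rewrite ?Rmin_left, ?Rmax_right in * by lra.
  - intros u Hu. apply Hh. lra.
  - intros u Hu. apply (is_derive_continuity_pt _ _ (dh u)), Hh. lra.
  - assert (Hdec : h t <= h 0).
    { assert (dh c <= 0).
      { unfold dh. assert (dg c <= L * g c) by (apply Hle; lra).
        assert (0 < exp (- L * c)) by apply exp_pos. nra. }
      nra. }
    unfold h in Hdec. rewrite Rmult_0_r, exp_0, Rmult_1_r in Hdec.
    replace (g t) with (g t * exp (- L * t) * exp (L * t)).
    + apply Rmult_le_compat_r; [left; apply exp_pos | exact Hdec].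
    + rewrite Rmult_assoc, <- exp_plus.
      replace (- L * t + L * t) with 0 by ring. rewrite exp_0. ring.
Qed.

Lemma is_lim_exp_decay (C nu : R) :
  0 < nu -> is_lim (fun t => C * exp (- nu * t)) p_infty 0.
Proof.
  intros Hnu.
  replace (Finite 0) with (Rbar_mult C 0) by (simpl; f_equal; ring).
  apply is_lim_scal_l.
  apply (is_lim_comp exp (fun t => - nu * t) p_infty 0 m_infty).
  - apply is_lim_exp_m.
  - replace m_infty with (Rbar_mult (- nu) p_infty).
    + apply is_lim_scal_l, is_lim_id.
    + simpl. unfold Rbar_mult'.
      destruct (Rle_dec 0 (- nu)); [exfalso; lra | reflexivity].
  - exists 0. intros; discriminate.
Qed.

Definition negpart (x : R) : R := Rmin x 0.

Lemma negpart_cases (x : R) :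
  (x <= 0 /\ negpart x = x) \/ (0 <= x /\ negpart x = 0).
Proof. unfold negpart, Rmin. destruct (Rle_dec x 0); [left | right]; lra. Qed.

Lemma negpart_eq0 (x : R) : 0 <= x -> negpart x = 0.
Proof. destruct (negpart_cases x); lra. Qed.

Lemma ge0_of_negpart_sq_le0 (x : R) : negpart x ^ 2 <= 0 -> 0 <= x.
Proof. destruct (negpart_cases x) as [[? ->] | [? _]]; nra. Qed.

Lemma mul_negpart (x : R) : x * negpart x = negpart x ^ 2.
Proof. destruct (negpart_cases x) as [[_ ->] | [_ ->]]; ring. Qed.

Lemma mul_negpart_le (x z : R) : x * negpart z <= negpart x ^ 2 + negpart z ^ 2.
Proof.
  destruct (negpart_cases x) as [[? Ex] | [? Ex]]; rewrite Ex;
  destruct (negpart_cases z) as [[? Ez] | [? Ez]]; rewrite Ez; nra.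
Qed.

Lemma mul3_negpart_le (x y z M : R) : Rabs y <= M -> Rabs z <= M ->
  y * z * negpart x <= M * (negpart x ^ 2 + negpart y ^ 2 + negpart z ^ 2).
Proof.
  intros Hy%Rabs_le_between Hz%Rabs_le_between.
  assert (0 <= M) by lra.
  destruct (negpart_cases x) as [[? Ex] | [? Ex]]; rewrite Ex;
  destruct (negpart_cases y) as [[? Ey] | [? Ey]]; rewrite Ey;
  destruct (negpart_cases z) as [[? Ez] | [? Ez]]; rewrite Ez.
  (* Either y z >= 0, or exactly one of y, z is negative and the other is <= M. *)
  all: first
    [ assert (0 <= y * z) by nra; nra
    | assert (y * x * z <= y * x * M) by (apply Rmult_le_compat_l; nra);
      assert (y * x <= x ^ 2 + y ^ 2) by nra; nra
    | assert (z * x * y <= z * x * M) by (apply Rmult_le_compat_l; nra);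
      assert (z * x <= x ^ 2 + z ^ 2) by nra; nra ].
Qed.

Lemma negpart_sq_bound (x h : R) :
  Rabs (negpart (x + h) ^ 2 - negpart x ^ 2 - 2 * negpart x * h) <= h ^ 2.
Proof.
  apply Rabs_le_between.
  destruct (negpart_cases x) as [[? Ex] | [? Ex]]; rewrite Ex;
  destruct (negpart_cases (x + h)) as [[? Eh] | [? Eh]]; rewrite Eh; split; nra.
Qed.

Lemma is_derive_negpart_sq (x : R) :
  is_derive (fun y => negpart y ^ 2) x (2 * negpart x).
Proof.
  apply is_derive_Reals. intros eps Heps.
  exists (mkposreal eps Heps). intros h Hh0 Hh. simpl in Hh.
  replace ((negpart (x + h) ^ 2 - negpart x ^ 2) / h - 2 * negpart x)
    with ((negpart (x + h) ^ 2 - negpart x ^ 2 - 2 * negpart x * h) / h)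
    by (field; exact Hh0).
  assert (Hpos : 0 < Rabs h) by (apply Rabs_pos_lt; exact Hh0).
  unfold Rdiv. rewrite Rabs_mult, Rabs_inv.
  apply Rle_lt_trans with (h ^ 2 * / Rabs h).
  - apply Rmult_le_compat_r; [left; apply Rinv_0_lt_compat, Hpos |].
    apply negpart_sq_bound.
  - rewrite <- pow2_abs. replace (Rabs h ^ 2 * / Rabs h) with (Rabs h) by (field; lra).
    exact Hh.
Qed.

Lemma dist_DFE_ge0 (a i r : R) : 0 <= dist_DFE a i r.
Proof.
  unfold dist_DFE.
  pose proof (Rabs_pos (1 - a - i - r - 1)). pose proof (Rabs_pos a).
  pose proof (Rabs_pos i). pose proof (Rabs_pos r). lra.
Qed.

Lemma dist_DFE_Omega (a i r : R) : in_Omega a i r -> dist_DFE a i r = 2 * (a + i + r).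
Proof.
  intros (? & ? & ? & ?). unfold dist_DFE.
  replace (1 - a - i - r - 1) with (- (a + i + r)) by ring.
  rewrite Rabs_Ropp, !Rabs_pos_eq; lra.
Qed.

Section SAIR.

Variables beta sigma kappa gamma delta q : R.

Definition rateA (a i r : R) : R :=
  q * beta * (1 - a - i - r) * (a + i) - sigma * a - kappa * a.
Definition rateI (a i r : R) : R :=
  (1 - q) * beta * (1 - a - i - r) * (a + i) + sigma * a - gamma * i.
Definition rateR (a i r : R) : R := kappa * a + gamma * i - delta * r.

Definition negpart_energy (a i r : R) : R :=
  negpart a ^ 2 + negpart i ^ 2 + negpart r ^ 2 + negpart (1 - a - i - r) ^ 2.

Definition negpart_energy_rate (a i r : R) : R :=
  2 * (negpart a * rateA a i r + negpart i * rateI a i r + negpart r * rateR a i r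
       - negpart (1 - a - i - r) * (rateA a i r + rateI a i r + rateR a i r)).

Lemma negpart_energy_Omega (a i r : R) : in_Omega a i r -> negpart_energy a i r = 0.
Proof.
  intros (? & ? & ? & ?). unfold negpart_energy.
  rewrite !negpart_eq0 by lra. ring.
Qed.

Lemma in_Omega_of_negpart_energy_le0 (a i r : R) :
  negpart_energy a i r <= 0 -> in_Omega a i r.
Proof.
  unfold negpart_energy. intros Hle.
  assert (Hsq : forall x, 0 <= negpart x ^ 2) by (intros; nra).
  assert (Ha := Hsq a). assert (Hi := Hsq i). assert (Hr := Hsq r).
  assert (Hs := Hsq (1 - a - i - r)).
  repeat split; [| | | cut (0 <= 1 - a - i - r); [lra |]];
    apply ge0_of_negpart_sq_le0; lra.
Qed.

Lemma is_derive_negpart_energy (A I Rc : R -> R) (t : R) :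
  SAIR_solution beta sigma kappa gamma delta q A I Rc -> 0 <= t ->
  is_derive (fun u => negpart_energy (A u) (I u) (Rc u)) t
    (negpart_energy_rate (A t) (I t) (Rc t)).
Proof.
  intros Hsol Ht. destruct (Hsol t Ht) as (HA & HI & HR).
  assert (HS : is_derive (fun u => 1 - A u - I u - Rc u) t
                 (- (rateA (A t) (I t) (Rc t) + rateI (A t) (I t) (Rc t)
                     + rateR (A t) (I t) (Rc t)))).
  { evar_last.
    - apply (is_derive_minus (fun u => 1 - A u - I u) Rc); [| exact HR].
      apply (is_derive_minus (fun u => 1 - A u) I); [| exact HI].
      apply (is_derive_minus (fun _ => 1) A); [apply is_derive_const | exact HA].
    - unfold minus, plus, opp, zero, rateA, rateI, rateR; simpl. ring. }
  assert (Hsq : forall (f : R -> R) df, is_derive f t df ->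
            is_derive (fun u => negpart (f u) ^ 2) t (2 * negpart (f t) * df)).
  { intros f df Hf. evar_last.
    - apply (is_derive_comp (fun y => negpart y ^ 2) f); [apply is_derive_negpart_sq | exact Hf].
    - unfold scal; simpl; unfold mult; simpl. ring. }
  unfold negpart_energy, negpart_energy_rate. evar_last.
  - apply @is_derive_plus; [apply @is_derive_plus; [apply @is_derive_plus |] |];
      apply Hsq; eassumption.
  - unfold plus, rateA, rateI, rateR; simpl. ring.
Qed.

Hypothesis beta_ge0 : 0 <= beta.
Hypothesis sigma_ge0 : 0 <= sigma.
Hypothesis kappa_ge0 : 0 <= kappa.
Hypothesis gamma_ge0 : 0 <= gamma.
Hypothesis delta_ge0 : 0 <= delta.
Hypothesis q_01 : 0 <= q <= 1.

Lemma negpart_infection_le (M a i s : R) :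
  Rabs a <= M -> Rabs i <= M -> Rabs s <= M ->
  q * (s * (a + i) * negpart a) + (1 - q) * (s * (a + i) * negpart i)
  - s * negpart s * (a + i)
  <= 4 * M * (negpart a ^ 2 + negpart i ^ 2 + negpart s ^ 2).
Proof.
  intros Ha Hi Hs.
  pose proof (proj1 (Rabs_le_between _ _) Ha).
  pose proof (proj1 (Rabs_le_between _ _) Hi).
  pose proof (proj1 (Rabs_le_between _ _) Hs).
  set (P := negpart a ^ 2 + negpart i ^ 2 + negpart s ^ 2).
  assert (Ha2 : 0 <= negpart a ^ 2) by nra.
  assert (Hi2 : 0 <= negpart i ^ 2) by nra.
  assert (Hs2 : 0 <= negpart s ^ 2) by nra.
  assert (HA : s * (a + i) * negpart a <= 2 * M * P).
  { pose proof (mul3_negpart_le a s i M Hs Hi).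
    assert (s * (a * negpart a) <= M * negpart a ^ 2) by (rewrite mul_negpart; nra).
    unfold P. nra. }
  assert (HI : s * (a + i) * negpart i <= 2 * M * P).
  { pose proof (mul3_negpart_le i s a M Hs Ha).
    assert (s * (i * negpart i) <= M * negpart i ^ 2) by (rewrite mul_negpart; nra).
    unfold P. nra. }
  assert (HS : - (s * negpart s) * (a + i) <= 2 * M * P).
  { rewrite mul_negpart. unfold P. nra. }
  assert (q * (s * (a + i) * negpart a) <= q * (2 * M * P))
    by (apply Rmult_le_compat_l; lra).
  assert ((1 - q) * (s * (a + i) * negpart i) <= (1 - q) * (2 * M * P))
    by (apply Rmult_le_compat_l; lra).
  lra.
Qed.

Lemma negpart_transfer_le (a i r s : R) :
  negpart a * (- (sigma + kappa) * a) + negpart i * (sigma * a - gamma * i)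
  + negpart r * (kappa * a + gamma * i - delta * r) + negpart s * (delta * r)
  <= (sigma + kappa + gamma + delta)
     * (negpart a ^ 2 + negpart i ^ 2 + negpart r ^ 2 + negpart s ^ 2).
Proof.
  pose proof (mul_negpart a). pose proof (mul_negpart i). pose proof (mul_negpart r).
  pose proof (mul_negpart_le a i). pose proof (mul_negpart_le a r).
  pose proof (mul_negpart_le i r). pose proof (mul_negpart_le r s).
  assert (0 <= negpart a ^ 2) by nra. assert (0 <= negpart i ^ 2) by nra.
  assert (0 <= negpart r ^ 2) by nra. assert (0 <= negpart s ^ 2) by nra.
  nra.
Qed.

Lemma negpart_energy_rate_le (M a i r : R) : 1 + Rabs a + Rabs i + Rabs r <= M ->
  negpart_energy_rate a i r
  <= 2 * (4 * beta * M + sigma + kappa + gamma + delta) * negpart_energy a i r.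
Proof.
  intros HM. set (s := 1 - a - i - r).
  assert (Hs : Rabs s <= M).
  { unfold s, Rminus.
    pose proof (Rabs_triang (1 + - a + - i) (- r)).
    pose proof (Rabs_triang (1 + - a) (- i)).
    pose proof (Rabs_triang 1 (- a)).
    rewrite !Rabs_Ropp, Rabs_R1 in *. lra. }
  pose proof (Rabs_pos a). pose proof (Rabs_pos i). pose proof (Rabs_pos r).
  assert (Hinf := negpart_infection_le M a i s ltac:(lra) ltac:(lra) Hs).
  assert (Htr := negpart_transfer_le a i r s).
  assert (Hsplit : negpart_energy_rate a i r = 2 *
    (beta * (q * (s * (a + i) * negpart a) + (1 - q) * (s * (a + i) * negpart i)
             - s * negpart s * (a + i))
     + (negpart a * (- (sigma + kappa) * a) + negpart i * (sigma * a - gamma * i)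
        + negpart r * (kappa * a + gamma * i - delta * r) + negpart s * (delta * r)))).
  { unfold negpart_energy_rate, rateA, rateI, rateR. fold s. ring. }
  rewrite Hsplit. unfold negpart_energy. fold s.
  assert (0 <= beta * (4 * M) * negpart r ^ 2)
    by (apply Rmult_le_pos; [apply Rmult_le_pos |]; nra).
  apply (Rmult_le_compat_l beta) in Hinf; [| exact beta_ge0].
  lra.
Qed.

Lemma SAIR_solution_in_Omega (A I Rc : R -> R) :
  SAIR_solution beta sigma kappa gamma delta q A I Rc ->
  in_Omega (A 0) (I 0) (Rc 0) -> forall t, 0 <= t -> in_Omega (A t) (I t) (Rc t).
Proof.
  intros Hsol H0 T HT.
  assert (Hcont : forall u, 0 <= u -> continuity_pt A u /\ continuity_pt I u /\ continuity_pt Rc u).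
  { intros u Hu. destruct (Hsol u Hu) as (HA & HI & HR).
    repeat split; eapply is_derive_continuity_pt; eassumption. }
  destruct (continuity_ab_maj (fun u => Rabs (A u) + Rabs (I u) + Rabs (Rc u)) 0 T HT)
    as (umax & Hmax & _).
  { intros u Hu. destruct (Hcont u ltac:(lra)) as (HA & HI & HR).
    repeat apply continuity_pt_plus; apply (continuity_pt_comp _ Rabs); auto;
      apply Rcontinuity_abs. }
  set (M := 1 + (Rabs (A umax) + Rabs (I umax) + Rabs (Rc umax))).
  set (E u := negpart_energy (A u) (I u) (Rc u)).
  assert (HE : E T <= E 0 * exp (2 * (4 * beta * M + sigma + kappa + gamma + delta) * T)).
  { apply (gronwall_is_derive E (fun u => negpart_energy_rate (A u) (I u) (Rc u)) _ T); [| | lra].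
    - intros u Hu. apply is_derive_negpart_energy; [exact Hsol | lra].
    - intros u Hu. apply negpart_energy_rate_le.
      pose proof (Hmax u Hu). unfold M. lra. }
  unfold E in HE. rewrite (negpart_energy_Omega _ _ _ H0), Rmult_0_l in HE.
  now apply in_Omega_of_negpart_energy_le0.
Qed.

Hypothesis gamma_gt0 : 0 < gamma.
Hypothesis kappa_sigma_gt0 : 0 < kappa + sigma.
Hypothesis delta_gt0 : 0 < delta.
Hypothesis R0_lt1 : SAIR_R0 beta sigma kappa gamma q < 1.

Definition R0_gap : R :=
  gamma * (kappa + sigma) - beta * (q * gamma + (1 - q) * kappa + sigma).

Lemma R0_gap_gt0 : 0 < R0_gap.
Proof.
  assert (Hpos : 0 < gamma * (kappa + sigma)) by nra.
  assert (Hlt := Rle_lt_trans _ _ _ (Rmax_r _ _) R0_lt1).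
  apply (Rmult_lt_compat_r _ _ _ Hpos) in Hlt.
  unfold Rdiv in Hlt. rewrite Rmult_assoc, Rinv_l, Rmult_1_r, Rmult_1_l in Hlt by lra.
  unfold R0_gap. lra.
Qed.

Lemma weighted_infected_rate (a i r : R) :
  (gamma + sigma) * rateA a i r + (sigma + kappa) * rateI a i r
  = - (R0_gap + beta * (q * gamma + (1 - q) * kappa + sigma) * (a + i + r)) * (a + i).
Proof. unfold rateA, rateI, R0_gap. ring. Qed.

Definition lyapunov_weight : R :=
  (kappa + gamma + 1) / R0_gap + / (gamma + sigma) + / (sigma + kappa).

Definition lyapunov (a i r : R) : R :=
  r + lyapunov_weight * ((gamma + sigma) * a + (sigma + kappa) * i).

Definition lyapunov_ratio : R := 1 + lyapunov_weight * (gamma + 2 * sigma + kappa).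

Definition decay_rate : R := Rmin delta 1 / lyapunov_ratio.

Lemma lyapunov_weight_large :
  kappa + gamma + 1 <= lyapunov_weight * R0_gap /\
  1 <= lyapunov_weight * (gamma + sigma) /\ 1 <= lyapunov_weight * (sigma + kappa).
Proof.
  pose proof R0_gap_gt0.
  assert (H1 : 0 < gamma + sigma) by lra. assert (H2 : 0 < sigma + kappa) by lra.
  pose proof (Rinv_0_lt_compat _ H1). pose proof (Rinv_0_lt_compat _ H2).
  assert (0 <= (kappa + gamma + 1) / R0_gap) by (apply Rlt_le, Rdiv_lt_0_compat; lra).
  unfold lyapunov_weight. repeat split.
  - rewrite !Rmult_plus_distr_r. unfold Rdiv.
    rewrite Rmult_assoc, Rinv_l, Rmult_1_r by lra. nra.
  - rewrite !Rmult_plus_distr_r, (Rinv_l (gamma + sigma)) by lra. nra.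
  - rewrite !Rmult_plus_distr_r, (Rinv_l (sigma + kappa)) by lra. nra.
Qed.

Lemma lyapunov_ratio_gt0 : 0 < lyapunov_ratio.
Proof.
  destruct lyapunov_weight_large as (_ & H1 & H2). unfold lyapunov_ratio. nra.
Qed.

Lemma decay_rate_gt0 : 0 < decay_rate.
Proof.
  apply Rdiv_lt_0_compat; [apply Rmin_pos; lra | apply lyapunov_ratio_gt0].
Qed.

Lemma lyapunov_bounds (a i r : R) : in_Omega a i r ->
  a + i + r <= lyapunov a i r <= lyapunov_ratio * (a + i + r).
Proof.
  intros (Ha & Hi & Hr & _). destruct lyapunov_weight_large as (_ & H1 & H2).
  unfold lyapunov, lyapunov_ratio. split; nra.
Qed.

Lemma lyapunov_rate_le (a i r : R) : in_Omega a i r ->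
  rateR a i r + lyapunov_weight * ((gamma + sigma) * rateA a i r + (sigma + kappa) * rateI a i r)
  <= - decay_rate * lyapunov a i r.
Proof.
  intros HO. pose proof HO as (Ha & Hi & Hr & _).
  destruct lyapunov_weight_large as (Hgap & _).
  assert (Hw : 0 <= lyapunov_weight) by (pose proof R0_gap_gt0; nra).
  assert (Hinf : (gamma + sigma) * rateA a i r + (sigma + kappa) * rateI a i r
                 <= - R0_gap * (a + i)).
  { rewrite weighted_infected_rate.
    assert (0 <= q * gamma + (1 - q) * kappa + sigma) by nra.
    assert (0 <= beta * (q * gamma + (1 - q) * kappa + sigma) * (a + i + r))
      by (apply Rmult_le_pos; [apply Rmult_le_pos |]; lra).
    nra. }
  assert (Hrate : rateR a i r + lyapunov_weight *
            ((gamma + sigma) * rateA a i r + (sigma + kappa) * rateI a i r)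
          <= - (Rmin delta 1 * (a + i + r))).
  { assert (Rmin delta 1 <= delta) by apply Rmin_l.
    assert (Rmin delta 1 <= 1) by apply Rmin_r.
    unfold rateR. nra. }
  destruct (lyapunov_bounds _ _ _ HO) as (_ & Hup).
  pose proof lyapunov_ratio_gt0.
  assert (decay_rate * lyapunov a i r <= Rmin delta 1 * (a + i + r)).
  { unfold decay_rate, Rdiv.
    apply Rle_trans with (Rmin delta 1 * / lyapunov_ratio * (lyapunov_ratio * (a + i + r))).
    - apply Rmult_le_compat_l; [| exact Hup].
      apply Rmult_le_pos; [apply Rlt_le, Rmin_pos | apply Rlt_le, Rinv_0_lt_compat]; lra.
    - right. field. lra. }
  lra.
Qed.

Lemma dist_DFE_exponential_decay (A I Rc : R -> R) :
  SAIR_solution beta sigma kappa gamma delta q A I Rc ->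
  in_Omega (A 0) (I 0) (Rc 0) -> forall t, 0 <= t ->
  dist_DFE (A t) (I t) (Rc t)
  <= lyapunov_ratio * dist_DFE (A 0) (I 0) (Rc 0) * exp (- decay_rate * t).
Proof.
  intros Hsol H0 t Ht.
  assert (HO := SAIR_solution_in_Omega A I Rc Hsol H0).
  set (V u := lyapunov (A u) (I u) (Rc u)).
  assert (HV : V t <= V 0 * exp (- decay_rate * t)).
  { apply (gronwall_is_derive V (fun u => rateR (A u) (I u) (Rc u) + lyapunov_weight *
             ((gamma + sigma) * rateA (A u) (I u) (Rc u)
              + (sigma + kappa) * rateI (A u) (I u) (Rc u))) _ t); [| | lra].
    - intros u Hu. destruct (Hsol u ltac:(lra)) as (HA & HI & HR).
      apply (is_derive_plus Rc); [exact HR |].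
      apply (is_derive_scal (fun u => (gamma + sigma) * A u + (sigma + kappa) * I u)).
      apply (is_derive_plus (fun u => (gamma + sigma) * A u)); apply is_derive_scal;
        assumption.
    - intros u Hu. apply lyapunov_rate_le, HO. lra. }
  destruct (lyapunov_bounds _ _ _ (HO t Ht)) as (Hlow & _).
  destruct (lyapunov_bounds _ _ _ H0) as (_ & Hup).
  pose proof (exp_pos (- decay_rate * t)).
  rewrite !dist_DFE_Omega by auto.
  unfold V in HV. nra.
Qed.

End SAIR.

Lemma DFE_GAS_of_exponential_decay (beta sigma kappa gamma delta q C nu : R) :
  0 < C -> 0 < nu ->
  (forall A I Rc : R -> R,
     SAIR_solution beta sigma kappa gamma delta q A I Rc ->
     in_Omega (A 0) (I 0) (Rc 0) -> forall t, 0 <= t ->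
     dist_DFE (A t) (I t) (Rc t) <= C * dist_DFE (A 0) (I 0) (Rc 0) * exp (- nu * t)) ->
  DFE_globally_asymptotically_stable beta sigma kappa gamma delta q.
Proof.
  intros HC Hnu Hdecay. split.
  - intros eps Heps. exists (eps / C). split; [now apply Rdiv_lt_0_compat |].
    intros A I Rc Hsol H0 Hd0 t Ht.
    assert (Hexp : exp (- nu * t) <= 1).
    { destruct (Req_dec t 0) as [-> | Ht0].
      - rewrite Rmult_0_r, exp_0. lra.
      - rewrite <- exp_0. left. apply exp_increasing. nra. }
    pose proof (exp_pos (- nu * t)).
    pose proof (dist_DFE_ge0 (A 0) (I 0) (Rc 0)).
    assert (C * dist_DFE (A 0) (I 0) (Rc 0) < eps).
    { apply (Rmult_lt_compat_l C) in Hd0; [| exact HC].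
      replace (C * (eps / C)) with eps in Hd0 by (field; lra). exact Hd0. }
    pose proof (Hdecay A I Rc Hsol H0 t Ht). nra.
  - intros A I Rc Hsol H0.
    apply (is_lim_le_le_loc (fun _ => 0)
             (fun t => C * dist_DFE (A 0) (I 0) (Rc 0) * exp (- nu * t))).
    + exists 0. intros t Ht. split; [apply dist_DFE_ge0 | apply Hdecay; auto; lra].
    + apply is_lim_const.
    + now apply is_lim_exp_decay.
Qed.

Theorem proposition1 (beta sigma kappa gamma delta q : R) :
  0 <= beta -> 0 <= sigma -> 0 <= kappa -> 0 < gamma ->
  0 < kappa + sigma -> 0 < delta -> 0 <= q <= 1 ->
  SAIR_R0 beta sigma kappa gamma q < 1 ->
  DFE_globally_asymptotically_stable beta sigma kappa gamma delta q.
Proof.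
  intros hbeta hsigma hkappa hgamma hkappa_sigma hdelta hq hR0.
  pose proof (Rlt_le _ _ hgamma). pose proof (Rlt_le _ _ hdelta).
  apply (DFE_GAS_of_exponential_decay _ _ _ _ _ _
           (lyapunov_ratio beta sigma kappa gamma q)
           (decay_rate beta sigma kappa gamma delta q)).
  - apply lyapunov_ratio_gt0; assumption.
  - apply decay_rate_gt0; assumption.
  - apply dist_DFE_exponential_decay; assumption.
Qed.
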